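(* Let $1\le k<n$, $m=\binom{n}{k}$, and let $\mathbf{A}=(A_1,\ldots,A_n)$ be an $n$-outcome POVM on $\mathbb{C}^d$. Then $\mathbf{A}$ is $k$-outcome-simulable if and only if there exist a probability vector $\vec p=(p_1,\ldots,p_m)$ and positive semidefinite operators $M_{ij}$ ($1\le i\le n$, $1\le j\le m$) such that $\sum_{j}M_{ij}=A_i$ for all $i$, $\sum_i M_{ij}=p_j\mathbb{I}$ for all $j$ (i.e. $\mathbf{M}$ is a joint measurement for the pair $\{\mathbf{A},(p_1\mathbb{I},\ldots,p_m\mathbb{I})\}$), and for every $j$ at least $n-k$ of the operators $M_{1j},\ldots,M_{nj}$ are zero.
   Context: A POVM on $\mathbb{C}^d$ with $n$ outcomes is a tuple $\mathbf{A}=(A_1,\ldots,A_n)$ of positive semidefinite operators with $\sum_a A_a=\mathbb{I}$ (some effects may be zero). Given a set $\mathcal{B}=\{\mathbf{B}^{(j)}\}_j$ of POVMs, a POVM $\mathbf{A}$ with $n$ outcomes is $\mathcal{B}$-simulable if there are a probability distribution $p(j)$ over (finitely many) elements of $\mathcal{B}$ and conditional probability distributions $q(i|j,i')$ (over $i\in\{1,\ldots,n\}$, for each $j$ and each outcome $i'$ of $\mathbf{B}^{(j)}$) such that $A_i=\sum_j p(j)\sum_{i'}q(i|j,i')B^{(j)}_{i'}$ for all $i$. $\mathbf{A}$ is $k$-outcome-simulable if it is $\mathcal{B}$-simulable where $\mathcal{B}$ is the set of all $k$-outcome POVMs on $\mathbb{C}^d$. *)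

(* Scalars: an arbitrary numClosedFieldType C (e.g. the
   complex numbers); matrices 'M[C]_d are operators on C^d. *)
From HB Require Import structures.
From mathcomp Require Import all_boot all_order all_algebra.
Set Implicit Arguments. Unset Strict Implicit. Unset Printing Implicit Defensive.
Import Order.TTheory GRing.Theory Num.Theory.
Local Open Scope ring_scope.

Definition adjmx (C : numClosedFieldType) (m n : nat) (A : 'M[C]_(m, n)) : 'M[C]_(n, m) :=
  map_mx Num.conj A^T.

Definition psd (C : numClosedFieldType) (d : nat) (A : 'M[C]_d) : Prop :=
  adjmx A = A /\ forall v : 'cV[C]_d, 0 <= (adjmx v *m A *m v) 0 0.

Definition is_povm (C : numClosedFieldType) (d n : nat) (A : 'I_n -> 'M[C]_d) : Prop :=
  (forall a, psd (A a)) /\ \sum_(a < n) A a = 1%:M.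

(* B-simulability, for a set Bset of k-outcome POVMs (given as a predicate).
   The finitely many POVMs used are indexed by 'I_N. *)
Definition simulable (C : numClosedFieldType) (d n k : nat)
  (Bset : ('I_k -> 'M[C]_d) -> Prop) (A : 'I_n -> 'M[C]_d) : Prop :=
  exists (N : nat) (p : 'I_N -> C) (B : 'I_N -> 'I_k -> 'M[C]_d)
         (q : 'I_N -> 'I_k -> 'I_n -> C),
    (forall j, Bset (B j)) /\
    (forall j, 0 <= p j) /\ \sum_(j < N) p j = 1 /\
    (forall j i' i, 0 <= q j i' i) /\
    (forall j i', \sum_(i < n) q j i' i = 1) /\
    (forall i, A i = \sum_(j < N) p j *: \sum_(i' < k) q j i' i *: B j i').

Definition k_outcome_simulable (C : numClosedFieldType) (d n k : nat)
  (A : 'I_n -> 'M[C]_d) : Prop :=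
  simulable (fun B : 'I_k -> 'M[C]_d => is_povm B) A.

From HB Require Import structures.
From mathcomp Require Import all_boot all_order all_algebra.
From mathcomp Require Import ring zify.
Import Order.TTheory GRing.Theory Num.Theory.
Local Open Scope ring_scope.
Set Implicit Arguments.
Unset Strict Implicit.

(* Forward: a stochastic post-processing of a k-outcome POVM is a mixture of
   deterministic relabellings f : 'I_k -> 'I_n, and each relabelled POVM has at
   most k nonzero effects.  Grouping the mixture according to a k-subset of
   outcomes containing the support gives the joint measurement, one column per
   k-subset.  Backward: a nonzero column j has at most k nonzero effects and,
   rescaled by 1/p_j, is a POVM; listing its support in 'I_k makes it a
   deterministic relabelling of a k-outcome POVM. *)

Lemma card_ord_setC_leq (n k : nat) (P : pred 'I_n) :
  (n - k <= #|[set i | P i]|)%N = (#|[set i | ~~ P i]| <= k)%N.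
Proof.
have := cardsC [set i | P i]; rewrite card_ord.
have -> : ~: [set i | P i] = [set i | ~~ P i] by apply/setP => i; rewrite !inE.
by move=> hc; apply/idP/idP; lia.
Qed.

Lemma exists_superset_card (T : finType) (A : {set T}) (k : nat) :
  (#|A| <= k <= #|T|)%N -> exists2 S : {set T}, A \subset S & #|S| = k.
Proof.
move=> /andP[hAk hkT].
have : (0 < #|[set B : {set T} | B \subset ~: A & #|B| == k - #|A|]|)%N.
  rewrite cards_draws bin_gt0; have := cardsC A; lia.
case/card_gt0P => B; rewrite inE => /andP[sBA /eqP cB].
exists (A :|: B); first exact: subsetUl.
rewrite cardsU disjoint_setI0 ?cards0 ?cB; first lia.
by rewrite disjoint_sym disjoints_subset.
Qed.

Section PositiveSemidefinite.
Variables (C : numClosedFieldType) (d : nat).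
Implicit Types (A B : 'M[C]_d) (v : 'cV[C]_d).

Lemma adjmxD (m n : nat) (X Y : 'M[C]_(m, n)) : adjmx (X + Y) = adjmx X + adjmx Y.
Proof. by apply/matrixP => i j; rewrite !mxE rmorphD. Qed.

Lemma adjmxZ (m n : nat) (c : C) (X : 'M[C]_(m, n)) :
  adjmx (c *: X) = c^* *: adjmx X.
Proof. by apply/matrixP => i j; rewrite !mxE rmorphM. Qed.

Lemma adjmx0 (m n : nat) : adjmx (0 : 'M[C]_(m, n)) = 0.
Proof. by apply/matrixP => i j; rewrite !mxE rmorph0. Qed.

Lemma psd0 : psd (0 : 'M[C]_d).
Proof. by split; [exact: adjmx0 | move=> v; rewrite mulmx0 mul0mx mxE]. Qed.

Lemma psdD A B : psd A -> psd B -> psd (A + B).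
Proof.
move=> [adjA formA] [adjB formB]; split; first by rewrite adjmxD adjA adjB.
by move=> v; rewrite mulmxDr mulmxDl mxE addr_ge0.
Qed.

Lemma psdZ (c : C) A : 0 <= c -> psd A -> psd (c *: A).
Proof.
move=> c_ge0 [adjA formA]; split; first by rewrite adjmxZ adjA geC0_conj.
by move=> v; rewrite -scalemxAr -scalemxAl mxE mulr_ge0.
Qed.

Lemma psd_sum (I : finType) (P : pred I) (F : I -> 'M[C]_d) :
  (forall i, P i -> psd (F i)) -> psd (\sum_(i | P i) F i).
Proof. by move=> psdF; apply: big_ind => //; [exact: psd0 | exact: psdD]. Qed.

Lemma form_delta_add A (a b : 'I_d) (c : C) :
  let v : 'cV[C]_d := delta_mx a 0 + c *: delta_mx b 0 in
  (adjmx v *m A *m v) 0 0 = A a a + c * A a b + c^* * A b a + c^* * c * A b b.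
Proof.
have adj_delta (x : 'I_d) : adjmx (delta_mx x 0 : 'cV[C]_d) = delta_mx 0 x.
  by apply/matrixP => i j; rewrite !mxE rmorph_nat andbC.
have entry_delta (x y : 'I_d) :
    ((delta_mx (0 : 'I_1) x : 'rV[C]_d) *m A *m delta_mx y (0 : 'I_1)) 0 0 = A x y.
  by rewrite -rowE -colE !mxE.
have form_delta (x y : 'I_d) :
    \sum_j ((delta_mx (0 : 'I_1) x : 'rV[C]_d) *m A) 0 j * delta_mx y (0 : 'I_1) j 0
    = A x y.
  by rewrite -(entry_delta x y) [in RHS]mxE.
rewrite /= adjmxD adjmxZ !adj_delta !mulmxDl !mulmxDr -!scalemxAl -!scalemxAr.
by rewrite !mxE !form_delta; ring.
Qed.

(* Polarization: test the form on [e_a + e_b] and [e_a + i e_b]. *)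
Lemma form_eq0_mx0 A : (forall v, (adjmx v *m A *m v) 0 0 = 0) -> A = 0.
Proof.
move=> form0.
have diag0 a : A a a = 0.
  by have := form0 (delta_mx a 0 + 0 *: delta_mx a 0);
     rewrite form_delta_add rmorph0 !mul0r !addr0.
apply/matrixP => a b; rewrite mxE.
have := form0 (delta_mx a 0 + 1 *: delta_mx b 0).
rewrite form_delta_add rmorph1 !diag0 !mul1r add0r addr0 => /eqP.
rewrite addrC addr_eq0 => /eqP skew.
have := form0 (delta_mx a 0 + 'i *: delta_mx b 0).
rewrite form_delta_add conjCi !diag0 skew => form_i.
have /eqP : 'i * 2 * A a b = 0 by rewrite -form_i; ring.
by rewrite !mulf_eq0 (negbTE (neq0Ci C)) pnatr_eq0 => /eqP.
Qed.

Lemma psd_sum_eq0 (n : nat) (F : 'I_n -> 'M[C]_d) :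
  (forall i, psd (F i)) -> \sum_(i < n) F i = 0 -> forall i, F i = 0.
Proof.
move=> psdF sumF0 i; apply: form_eq0_mx0 => v.
have : \sum_(j < n) (adjmx v *m F j *m v) 0 0 = 0.
  by rewrite -summxE -mulmx_suml -mulmx_sumr sumF0 mulmx0 mul0mx mxE.
by move/psumr_eq0P => -> // j _; case: (psdF j).
Qed.

End PositiveSemidefinite.

Lemma sum_ffun_prod_marginal (R : comNzRingType) (m n : nat)
    (q : 'I_m -> 'I_n -> R) (l0 : 'I_m) (i0 : 'I_n) :
  (forall l, \sum_(i < n) q l i = 1) ->
  \sum_(f : {ffun 'I_m -> 'I_n}) (\prod_(l < m) q l (f l)) * (f l0 == i0)%:R
  = q l0 i0.
Proof.
move=> q_stoch.
pose F (l : 'I_m) (i : 'I_n) := if l == l0 then q l i * (i == i0)%:R else q l i.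
transitivity (\sum_(f : {ffun 'I_m -> 'I_n}) \prod_(l < m) F l (f l)).
  apply: eq_bigr => f _; rewrite (bigD1 l0) //= [in RHS](bigD1 l0) //= /F eqxx.
  by rewrite mulrAC; congr (_ * _); apply: eq_bigr => l /negbTE ->.
rewrite -bigA_distr_bigA (bigD1 l0) //= [X in _ * X]big1 ?mulr1; last first.
  by move=> l /negbTE l_neq; rewrite /F l_neq q_stoch.
rewrite /F eqxx (bigD1 i0) //= eqxx mulr1 big1 ?addr0 // => i /negbTE ->.
by rewrite mulr0.
Qed.

Section Coarsening.
Variables (C : numClosedFieldType) (d : nat).

Definition coarsen (m n : nat) (B : 'I_m -> 'M[C]_d) (f : 'I_m -> 'I_n) :
  'I_n -> 'M[C]_d := fun i => \sum_(l | f l == i) B l.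

Lemma coarsen_povm (m n : nat) (B : 'I_m -> 'M[C]_d) (f : 'I_m -> 'I_n) :
  is_povm B -> is_povm (coarsen B f).
Proof.
move=> [psdB sumB]; split=> [i|]; first exact: psd_sum.
by rewrite -sumB (partition_big f xpredT).
Qed.

Lemma card_support_coarsen (m n : nat) (B : 'I_m -> 'M[C]_d) (f : 'I_m -> 'I_n) :
  (#|[set i | coarsen B f i != 0%R]| <= m)%N.
Proof.
have card_im : (#|f @: [set: 'I_m]| <= m)%N.
  by apply: leq_trans (leq_imset_card f _) _; rewrite cardsT card_ord.
apply: leq_trans card_im; apply/subset_leq_card/subsetP => i.
rewrite inE; apply: contraNT => i_notin.
rewrite /coarsen big_pred0 // => l; apply: contraNF i_notin => /eqP <-.
exact: imset_f.
Qed.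

Lemma postprocess_mixture (m n : nat) (B : 'I_m -> 'M[C]_d)
    (q : 'I_m -> 'I_n -> C) (i : 'I_n) :
  (forall l, \sum_(i < n) q l i = 1) ->
  \sum_(l < m) q l i *: B l
  = \sum_(f : {ffun 'I_m -> 'I_n}) (\prod_(l < m) q l (f l)) *: coarsen B f i.
Proof.
move=> q_stoch.
under eq_bigr => l _ do rewrite -(sum_ffun_prod_marginal l i q_stoch) scaler_suml.
rewrite exchange_big /=; apply: eq_bigr => f _.
rewrite /coarsen scaler_sumr [RHS]big_mkcond /=; apply: eq_bigr => l _.
by case: eqP => _; rewrite ?mulr1 ?mulr0 ?scale0r.
Qed.

Lemma coarsen_recover (m n : nat) (F : 'I_n -> 'M[C]_d) (Z : {set 'I_n})
    (g : 'I_n -> 'I_m) (h : 'I_m -> 'I_n) (i : 'I_n) :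
  {in Z, cancel g h} -> (forall i, i \notin Z -> F i = 0) ->
  \sum_(l < m) (i == h l)%:R *: coarsen F g l = F i.
Proof.
move=> ghK F_supp.
transitivity (\sum_(i1 < n) (i == h (g i1))%:R *: F i1).
  rewrite [RHS](partition_big g xpredT) //; apply: eq_bigr => l _.
  by rewrite scaler_sumr; apply: eq_bigr => i1 /eqP ->.
rewrite (bigD1 i) //= big1 => [|i1 i1_neq].
  case: (boolP (i \in Z)) => [/ghK -> | /F_supp ->];
  by rewrite ?eqxx ?scale1r ?scaler0 addr0.
case: (boolP (i1 \in Z)) => [/ghK -> | /F_supp ->]; last by rewrite scaler0.
by rewrite eq_sym (negbTE i1_neq) scale0r.
Qed.

End Coarsening.

Section SetRank.
Variables (T : finType) (Z : {set T}) (m : nat).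

Definition set_rank (x : T) : 'I_m.+1 := inord (index x (enum Z)).

Definition set_unrank (x0 : T) (l : 'I_m.+1) : T := nth x0 (enum Z) l.

Lemma set_rankK (x0 : T) :
  (#|Z| <= m.+1)%N -> {in Z, cancel set_rank (set_unrank x0)}.
Proof.
move=> card_Z x x_in.
rewrite /set_rank /set_unrank inordK ?nth_index ?mem_enum //.
by apply: leq_trans card_Z; rewrite cardE index_mem mem_enum.
Qed.

End SetRank.

Definition k_sparse_trivial_joint (C : numClosedFieldType) (d n k : nat)
    (A : 'I_n -> 'M[C]_d) : Prop :=
  exists (p : 'I_('C(n, k)) -> C) (M : 'I_n -> 'I_('C(n, k)) -> 'M[C]_d),
    (forall j, 0 <= p j) /\ \sum_(j < 'C(n, k)) p j = 1 /\
    (forall i j, psd (M i j)) /\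
    (forall i, \sum_(j < 'C(n, k)) M i j = A i) /\
    (forall j, \sum_(i < n) M i j = p j *: 1%:M) /\
    (forall j, (n - k <= #|[set i | M i j == (0 : 'M[C]_d)%R]|)%N).

Section SparseJoint.
Variables (C : numClosedFieldType) (d n : nat) (A : 'I_n -> 'M[C]_d).

(* Group the terms of the mixture by a [k]-subset of outcomes containing their
   support; the [k]-subsets are enumerated by ['I_('C(n, k))]. *)
Lemma sparse_joint_of_mixture (k : nat) (T : finType) (w : T -> C)
    (E : T -> 'I_n -> 'M[C]_d) :
  (k <= n)%N -> (forall t, 0 <= w t) -> \sum_t w t = 1 ->
  (forall t, is_povm (E t)) ->
  (forall t, #|[set i | E t i != 0%R]| <= k)%N ->
  (forall i, A i = \sum_t w t *: E t i) ->
  k_sparse_trivial_joint k A.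
Proof.
move=> le_kn w_ge0 sum_w povmE suppE defA.
pose K := [set S : {set 'I_n} | #|S| == k].
have cover t : exists S, (S \in K) && ([set i | E t i != 0] \subset S).
  have [|S supp_sub card_S] := @exists_superset_card _ [set i | E t i != 0] k.
    by rewrite suppE card_ord.
  by exists S; rewrite inE card_S eqxx.
pose cell t := xchoose (cover t).
have cell_K t : cell t \in K by case/andP: (xchooseP (cover t)).
have supp_cell t : [set i | E t i != 0] \subset cell t.
  by case/andP: (xchooseP (cover t)).
have sum_cells (V : nmodType) (F : T -> V) :
    \sum_(j < #|K|) \sum_(t | cell t == enum_val j) F t = \sum_t F t.
  rewrite [RHS](partition_big cell (mem K)) //=.
  by rewrite (big_enum_val (A := mem K)).
rewrite /k_sparse_trivial_joint -[in 'C(n, k)](card_ord n) -card_draws -/K.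
exists (fun j => \sum_(t | cell t == enum_val j) w t),
       (fun i j => \sum_(t | cell t == enum_val j) w t *: E t i).
split; first by move=> j; apply: sumr_ge0.
split; first by rewrite sum_cells.
split; first by move=> i j; apply: psd_sum => t _; exact/psdZ/(povmE t).1.
split; first by move=> i; rewrite sum_cells defA.
split.
  move=> j; rewrite exchange_big scaler_suml; apply: eq_bigr => t _.
  by rewrite -scaler_sumr (povmE t).2.
move=> j; rewrite card_ord_setC_leq.
have /[!inE] /eqP card_cell := enum_valP j.
rewrite -card_cell; apply/subset_leq_card/subsetP => i; rewrite inE.
apply: contraNT => i_notin; apply/eqP/big1 => t /eqP cell_t.
apply/eqP; rewrite scaler_eq0; apply/orP; right.
apply: contraNT i_notin => Eti; rewrite -cell_t.
by apply: (subsetP (supp_cell t)); rewrite inE.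
Qed.

Lemma sparse_joint_of_simulable (k : nat) :
  (k <= n)%N -> k_outcome_simulable k A -> k_sparse_trivial_joint k A.
Proof.
move=> le_kn [N [p [B [q [povmB [p_ge0 [sum_p [q_ge0 [q_stoch defA]]]]]]]]].
pose w (t : 'I_N * {ffun 'I_k -> 'I_n}) := p t.1 * \prod_(l < k) q t.1 l (t.2 l).
apply: (sparse_joint_of_mixture (w := w) (E := fun t => coarsen (B t.1) t.2))
  => //.
- by move=> t; rewrite mulr_ge0 ?prodr_ge0.
- rewrite -sum_p -(pair_bigA _ (fun j f => w (j, f))); apply: eq_bigr => j _.
  by rewrite /w /= -mulr_sumr -bigA_distr_bigA big1 ?mulr1.
- by move=> t; apply/coarsen_povm/povmB.
- by move=> t; apply: card_support_coarsen.
move=> i; rewrite defA -(pair_bigA _ (fun j f => w (j, f) *: coarsen (B j) f i)).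
apply: eq_bigr => j _; rewrite (postprocess_mixture _ i (q_stoch j)) scaler_sumr.
by apply: eq_bigr => f _; rewrite scalerA.
Qed.

Lemma simulable_of_sparse_joint (k : nat) (i0 : 'I_n) :
  is_povm A -> k_sparse_trivial_joint k.+1 A -> k_outcome_simulable k.+1 A.
Proof.
move=> povmA [p [M [p_ge0 [sum_p [psdM [sumM [colM zerosM]]]]]]].
pose Z j := [set i | M i j != 0].
have card_Z j : (#|Z j| <= k.+1)%N by rewrite -card_ord_setC_leq.
pose g j := set_rank (Z j) k.
pose h j := set_unrank (Z j) i0 : 'I_k.+1 -> 'I_n.
(* When p j = 0 the column vanishes and B j only has to be some POVM. *)
pose B j := if p j == 0 then coarsen A (g j)
            else coarsen (fun i => (p j)^-1 *: M i j) (g j).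
exists 'C(n, k.+1), p, B, (fun j l i => (i == h j l)%:R).
split.
  move=> j; rewrite /B; case: eqP => [_ | /eqP p_neq0]; apply: coarsen_povm => //.
  split=> [i|]; first by apply: psdZ; rewrite ?invr_ge0.
  by rewrite -scaler_sumr colM scalerA mulVf ?scale1r.
do 2!split => //.
split; first by move=> *; apply: ler0n.
split.
  by move=> j l; rewrite (bigD1 (h j l)) //= eqxx big1 ?addr0 // => i /negbTE ->.
move=> i; rewrite -sumM; apply: eq_bigr => j _; rewrite /B.
case: eqP => [p0 | /eqP p_neq0].
  have col0 : \sum_(i < n) M i j = 0 by rewrite colM p0 scale0r.
  by rewrite p0 scale0r (psd_sum_eq0 (fun i => psdM i j) col0).
rewrite (coarsen_recover (Z := Z j)) ?scalerA ?mulfV ?scale1r //.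
  exact: set_rankK.
by move=> i1; rewrite inE negbK => /eqP ->; rewrite scaler0.
Qed.

End SparseJoint.

Unset Implicit Arguments.

Theorem proposition2 (C : numClosedFieldType) (d n k : nat)
  (hk1 : (1 <= k)%N) (hkn : (k < n)%N) (A : 'I_n -> 'M[C]_d) (hA : is_povm A) :
  k_outcome_simulable k A <->
  exists (p : 'I_('C(n, k)) -> C) (M : 'I_n -> 'I_('C(n, k)) -> 'M[C]_d),
    (forall j, 0 <= p j) /\ \sum_(j < 'C(n, k)) p j = 1 /\
    (forall i j, psd (M i j)) /\
    (forall i, \sum_(j < 'C(n, k)) M i j = A i) /\
    (forall j, \sum_(i < n) M i j = p j *: 1%:M) /\
    (forall j, (n - k <= #|[set i | M i j == (0 : 'M[C]_d)%R]|)%N).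
Proof.
case: k hk1 hkn => [//|k] _ hkn.
have i0 : 'I_n := Ordinal (leq_ltn_trans (leq0n k.+1) hkn).
split; first exact: sparse_joint_of_simulable (ltnW hkn).
exact: simulable_of_sparse_joint i0 hA.
Qed.
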